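(* For every positive integer $k$, $NPO(k)$ is well defined (finite) and $NPO(k) \le R(k,k+1)$.
   Context: All graphs are finite, simple and undirected; $A(G)$ denotes the adjacency matrix of $G$. Eigenvalues are counted with multiplicity. For a positive integer $k$, $NPO(k)$ is the smallest integer $n$ such that the adjacency matrix of every graph with at least $n$ vertices has at least $k$ nonpositive eigenvalues. The Ramsey number $R(m,n)$ is the minimum number $N$ such that every graph on at least $N$ vertices has either an independent set of size $m$ or an induced subgraph isomorphic to the complete graph $K_n$. *)

From HB Require Import structures.
From mathcomp Require Import all_boot all_order all_algebra all_field.
Set Implicit Arguments. Unset Strict Implicit. Unset Printing Implicit Defensive.
Import Order.TTheory GRing.Theory Num.Theory.
Local Open Scope ring_scope.

Definition simple_graph (n : nat) (e : rel 'I_n) : Prop :=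
  symmetric e /\ irreflexive e.

(* Adjacency matrix A(G), with entries in algC (algebraic complex numbers,
   an algebraically closed field containing all eigenvalues). *)
Definition adj_mx (n : nat) (e : rel 'I_n) : 'M[algC]_n :=
  \matrix_(i, j) (e i j)%:R.

(* s is the multiset of eigenvalues of A (counted with multiplicity):
   the characteristic polynomial factors as prod_(r in s) (X - r). *)
Definition is_spectrum (n : nat) (A : 'M[algC]_n) (s : seq algC) : Prop :=
  char_poly A = \prod_(r <- s) ('X - r%:P).

(* A has at least k nonpositive eigenvalues (counted with multiplicity).
   In algC, (r <= 0) means r is real and nonpositive. *)
Definition has_k_nonpos_eigs (k n : nat) (A : 'M[algC]_n) : Prop :=
  exists s : seq algC, is_spectrum A s /\ (k <= count (fun r : algC => (r <= 0)%R) s)%N.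

Definition NPO_prop (k N : nat) : Prop :=
  forall (m : nat) (e : rel 'I_m), (N <= m)%N -> simple_graph e ->
    has_k_nonpos_eigs k (adj_mx e).

Definition is_NPO (k n : nat) : Prop :=
  NPO_prop k n /\ forall N, NPO_prop k N -> (n <= N)%N.

Definition has_indep_set (m : nat) (N : nat) (e : rel 'I_N) : Prop :=
  exists S : {set 'I_N}, #|S| = m /\ {in S &, forall x y, ~~ e x y}.

Definition has_clique (m : nat) (N : nat) (e : rel 'I_N) : Prop :=
  exists S : {set 'I_N}, #|S| = m /\ {in S &, forall x y, x != y -> e x y}.

Definition Ramsey_prop (a b N : nat) : Prop :=
  forall (m : nat) (e : rel 'I_m), (N <= m)%N -> simple_graph e ->
    has_indep_set a e \/ has_clique b e.

Definition is_Ramsey (a b R : nat) : Prop :=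
  Ramsey_prop a b R /\ forall N, Ramsey_prop a b N -> (R <= N)%N.

From HB Require Import structures.
From mathcomp Require Import all_boot all_order all_algebra all_field.
From mathcomp Require Import zify.
From Stdlib Require Import Classical_Prop.
Import Order.TTheory GRing.Theory Num.Theory.
Set Implicit Arguments. Unset Strict Implicit. Unset Printing Implicit Defensive.

(* Both minima exist because both properties hold for some N and are
   predicates on nat; so it suffices to show that every N with the Ramsey
   property for (k, k+1) has the NPO property for k, and that some N has
   the Ramsey property at all.

   1. Ramsey: a graph on 2^(a+b) vertices has a homogeneous set of size a
      with no edges or of size b with all edges (Erdos-Szekeres induction).
   2. Spectral counting (a half of Courant-Fischer): a Hermitian matrix A
      whose form x A x^* is <= 0 on a k-dimensional subspace has at least k
      nonpositive eigenvalues.  Diagonalize A = P^* D P unitarily; if fewer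
      than k entries of D were <= 0, some nonzero x of the subspace would
      have coordinates x P^* supported on the positive entries of D, making
      the form positive.
   3. Test subspaces: an independent set of size k spans a k-dimensional
      space on which the adjacency form vanishes; a clique of size k+1
      carries the k-dimensional space of zero-sum vectors, on which the form
      is |sum x|^2 - sum |x_i|^2 = - sum |x_i|^2 <= 0. *)

Section Ramsey.
Variables (T : finType) (e : rel T).
Hypothesis e_sym : symmetric e.

Definition homogeneous (c : bool) (S : {set T}) : Prop :=
  {in S &, forall x y, x != y -> e x y = c}.

Definition homogeneous_in (X : {set T}) (c : bool) (a : nat) : Prop :=
  exists S : {set T}, [/\ S \subset X, #|S| = a & homogeneous c S].

Definition colour_nbhd (X : {set T}) (v : T) (c : bool) : {set T} :=
  (X :\ v) :&: [set u | e v u == c].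

Lemma homogeneous_in0 (X : {set T}) c : homogeneous_in X c 0.
Proof. by exists set0; split; rewrite ?sub0set ?cards0 // => x y; rewrite inE. Qed.

Lemma homogeneous_in_sub (X Y : {set T}) c a :
  Y \subset X -> homogeneous_in Y c a -> homogeneous_in X c a.
Proof. by move=> YX [S [SY cardS homS]]; exists S; split=> //; apply: subset_trans YX. Qed.

Lemma homogeneous_in_extend (X : {set T}) v c a :
  v \in X -> homogeneous_in (colour_nbhd X v c) c a -> homogeneous_in X c a.+1.
Proof.
move=> vX [S [SN cardS homS]].
have Sv u : u \in S -> [&& u != v, u \in X & e v u == c].
  by move/(subsetP SN); rewrite !inE -andbA.
have vS : v \notin S by apply/negP => /Sv; rewrite eqxx.
exists (v |: S); split.
- by rewrite subUset sub1set vX; apply/subsetP => u /Sv /and3P[].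
- by rewrite cardsU1 vS cardS.
move=> x y; rewrite !inE => /predU1P[->|xS] /predU1P[->|yS]; rewrite ?eqxx //.
- by move=> _; have /and3P[_ _ /eqP] := Sv y yS.
- by move=> _; rewrite e_sym; have /and3P[_ _ /eqP] := Sv x xS.
- exact: homS.
Qed.

Lemma card_colour_nbhds (X : {set T}) v :
  v \in X -> #|colour_nbhd X v true| + #|colour_nbhd X v false| = #|X|.-1.
Proof.
move=> vX; rewrite (cardsD1 v X) vX -(cardsID [set u | e v u] (X :\ v)).
have -> : colour_nbhd X v true = (X :\ v) :&: [set u | e v u].
  by apply/setP => u; rewrite !inE; case: (e v u).
have -> // : colour_nbhd X v false = (X :\ v) :\: [set u | e v u].
by apply/setP => u; rewrite !inE; case: (e v u); rewrite ?andbT ?andbF.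
Qed.

Lemma colour_nbhd_sub (X : {set T}) v c : colour_nbhd X v c \subset X.
Proof. exact: subset_trans (subsetIl _ _) (subD1set _ _). Qed.

Lemma ramsey_bound n a b (X : {set T}) :
  a + b = n -> 2 ^ n <= #|X| -> homogeneous_in X false a \/ homogeneous_in X true b.
Proof.
elim: n a b X => [|n IH] [|a] [|b] X // abn cardX;
  try by [left; apply: homogeneous_in0 | right; apply: homogeneous_in0].
have [v vX] : exists v, v \in X.
  by apply/set0Pn; rewrite -card_gt0; apply: leq_trans cardX; rewrite expn_gt0.
have ncard := card_colour_nbhds vX; rewrite expnS in cardX.
have [big_true | small_true] := leqP (2 ^ n) #|colour_nbhd X v true|.
  have sum_n : a.+1 + b = n by lia.
  have [homF | homT] := IH a.+1 b _ sum_n big_true.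
  - by left; apply: homogeneous_in_sub (colour_nbhd_sub X v true) homF.
  - by right; apply: homogeneous_in_extend vX homT.
have big_false : 2 ^ n <= #|colour_nbhd X v false| by lia.
have sum_n : a + b.+1 = n by lia.
have [homF | homT] := IH a b.+1 _ sum_n big_false.
- by left; apply: homogeneous_in_extend vX homF.
- by right; apply: homogeneous_in_sub (colour_nbhd_sub X v false) homT.
Qed.

End Ramsey.

Lemma ramsey_prop_pow2 a b : Ramsey_prop a b (2 ^ (a + b)).
Proof.
move=> m e le_pow [e_sym eirr].
have := ramsey_bound e_sym (erefl (a + b)) (X := [set: 'I_m]).
rewrite cardsT card_ord => /(_ le_pow) [] [S [_ cardS homS]]; [left | right].
  exists S; split=> // x y xS yS; have [->|xy] := eqVneq x y; first by rewrite eirr.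
  by rewrite homS.
by exists S; split=> // x y xS yS xy; rewrite homS.
Qed.

Lemma ex_minimal (P : nat -> Prop) N :
  P N -> exists n, P n /\ forall m, P m -> (n <= m)%N.
Proof.
elim/ltn_ind: N => N IH PN.
have [[m [Pm ltmN]] | none] := classic (exists m, P m /\ (m < N)%N).
  exact: IH ltmN Pm.
exists N; split=> // m Pm; rewrite leqNgt; apply/negP => ltmN.
by apply: none; exists m.
Qed.

Local Open Scope ring_scope.
Local Open Scope sesquilinear_scope.

Lemma char_poly_conj (R : comNzRingType) n (P Q D : 'M[R]_n) :
  Q *m P = 1%:M -> char_poly (Q *m D *m P) = char_poly D.
Proof.
move=> QP; rewrite /char_poly /char_poly_mx.
have -> : 'X%:M - map_mx (@polyC R) (Q *m D *m P) =
    map_mx (@polyC R) Q *m ('X%:M - map_mx (@polyC R) D) *m map_mx (@polyC R) P.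
  rewrite mulmxBr mulmxBl !map_mxM; congr (_ - _).
  by rewrite mul_mx_scalar -scalemxAl -map_mxM QP map_mx1 scalemx1.
by rewrite !det_mulmx mulrAC -det_mulmx -map_mxM QP map_mx1 det1 mul1r.
Qed.

Lemma count_enum_ord n (p : pred 'I_n) : count p (enum 'I_n) = #|p|.
Proof. by rewrite cardE -size_filter; congr size; rewrite !enumT /enum_mem. Qed.

Section NormalMatrices.
Variables (C : numClosedFieldType) (n : nat) (A : 'M[C]_n).
Hypothesis A_normal : A \is normalmx.
Let P := spectralmx A.
Let d := spectral_diag A.

Lemma normal_spectral_decomposition : A = P ^t* *m diag_mx d *m P.
Proof. by rewrite -invmx_unitary ?spectral_unitarymx //; apply/orthomx_spectralP. Qed.

Lemma char_poly_normal :
  char_poly A = \prod_(r <- [seq d 0 i | i <- enum 'I_n]) ('X - r%:P).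
Proof.
rewrite big_map big_enum /= normal_spectral_decomposition char_poly_conj; last first.
  by rewrite -invmx_unitary ?spectral_unitarymx // mulVmx ?spectral_unit.
rewrite char_poly_trig ?diag_mx_is_trig //; apply: eq_bigr => i _.
by rewrite mxE eqxx mulr1n.
Qed.

End NormalMatrices.

Definition qform (C : numClosedFieldType) n (A : 'M[C]_n) (x : 'rV[C]_n) : C :=
  (x *m A *m x ^t*) 0 0.

Lemma qform_unitary_diag (C : numClosedFieldType) n (P : 'M[C]_n) (d y : 'rV[C]_n) :
  P \is unitarymx ->
  qform (P ^t* *m diag_mx d *m P) (y *m P) = \sum_j y 0 j * d 0 j * (y 0 j)^*.
Proof.
move=> /unitarymxP PPt; rewrite /qform trmx_mul map_mxM.
have -> : y *m P *m (P ^t* *m diag_mx d *m P) *m (P ^t* *m y ^t*)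
    = y *m diag_mx d *m y ^t*.
  by rewrite !mulmxA -(mulmxA y) PPt mulmx1 -(mulmxA _ P) PPt mulmx1.
by rewrite mul_mx_diag mxE; apply: eq_bigr => j _; rewrite !mxE.
Qed.

Lemma diag_form_gt0 (C : numClosedFieldType) n (d y : 'rV[C]_n) :
  (forall j, d 0 j \is Num.real) -> (forall j, d 0 j <= 0 -> y 0 j = 0) -> y != 0 ->
  0 < \sum_j y 0 j * d 0 j * (y 0 j)^*.
Proof.
move=> dreal ysupp yN0.
have [j0 yj0] : exists j, y 0 j != 0.
  apply/existsP; apply: contraR yN0 => /existsPn yz; apply/eqP/rowP => j.
  by rewrite mxE; apply/eqP; rewrite -[_ == _]negbK yz.
have term_pos j : y 0 j != 0 -> 0 < y 0 j * d 0 j * (y 0 j)^*.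
  move=> yj; rewrite mulrAC mulr_gt0 ?mul_conjC_gt0 //.
  by rewrite real_ltNge ?real0 //; apply: contra yj => /ysupp ->.
have term_ge0 j : 0 <= y 0 j * d 0 j * (y 0 j)^*.
  by have [->|/term_pos/ltW] := eqVneq (y 0 j) 0; rewrite ?mul0r.
rewrite (bigD1 j0) //=; apply: ltr_wpDr (term_pos _ yj0).
by apply: sumr_ge0 => j _; apply: term_ge0.
Qed.

Lemma row_space_vanishing_on (F : fieldType) k n (W : 'M[F]_(k, n)) (N : {set 'I_n}) :
  row_free W -> (#|N| < k)%N ->
  exists v : 'rV_k, v *m W != 0 /\ forall j, j \in N -> (v *m W) 0 j = 0.
Proof.
move=> Wfree ltNk.
pose M : 'M_(k, #|N|) := \matrix_(i, l) W i (enum_val l).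
have M_not_free : ~~ row_free M.
  by apply: contraL ltNk => /eqP rkM; rewrite -leqNgt -rkM rank_leq_col.
have [v [vN0 vM]] : exists v : 'rV_k, v != 0 /\ v *m M = 0.
  apply: NNPP => none; move/negP: M_not_free; apply; apply: inj_row_free => v vM.
  by apply/eqP; apply: contraT => vN0; exfalso; apply: none; exists v.
exists v; split; first by rewrite mulmx_free_eq0.
move=> j Nj; have <- : (v *m M) 0 (enum_rank_in Nj j) = (v *m W) 0 j.
  by rewrite !mxE; apply: eq_bigr => i _; rewrite !mxE enum_rankK_in.
by rewrite vM mxE.
Qed.

Lemma nonpos_eigs_of_nonpos_subspace k n (A : 'M[algC]_n) (W : 'M_(k, n)) :
  A \is hermsymmx -> row_free W -> (forall v, qform A (v *m W) <= 0) ->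
  has_k_nonpos_eigs k A.
Proof.
move=> Aherm Wfree Wnonpos; have Anormal := hermitian_normalmx Aherm.
set P := spectralmx A; set d := spectral_diag A.
have Pu : P \is unitarymx := spectral_unitarymx A.
have dreal j : d 0 j \is Num.real.
  by have /mxOverP := hermitian_spectral_diag_real Aherm; apply.
exists [seq d 0 i | i <- enum 'I_n]; split; first exact: char_poly_normal.
rewrite count_map count_enum_ord -cardsE leqNgt; apply/negP => ltNk.
have WPfree : row_free (W *m P ^t*).
  by rewrite /row_free mxrankMfree // row_free_unit unitarymx_unit ?trmxC_unitary.
have [v [yN0 ysupp]] := row_space_vanishing_on WPfree ltNk.
have xE : v *m W = v *m (W *m P ^t*) *m P by rewrite mulmxA mulmxKtV.
have := Wnonpos v; rewrite xE {1}(normal_spectral_decomposition Anormal).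
rewrite qform_unitary_diag //; apply/negP; rewrite lt_geF // diag_form_gt0 // => j dj.
by apply: ysupp; rewrite inE.
Qed.

Lemma qform_expand (C : numClosedFieldType) n (A : 'M[C]_n) (x : 'rV_n) :
  qform A x = \sum_i \sum_l A i l * (x 0 i * (x 0 l)^*).
Proof.
rewrite /qform mxE exchange_big /=; apply: eq_bigr => l _.
rewrite !mxE big_distrl /=; apply: eq_bigr => i _.
by rewrite mulrA [x 0 i * _]mulrC.
Qed.

Definition embed_mx (R : nzRingType) k n (f : 'I_k -> 'I_n) : 'M[R]_(k, n) :=
  \matrix_(a, i) (i == f a)%:R.

Lemma embed_mx_entry (R : nzRingType) k n (f : 'I_k -> 'I_n) (v : 'rV[R]_k) a :
  injective f -> (v *m embed_mx R f) 0 (f a) = v 0 a.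
Proof.
move=> finj; rewrite mxE (bigD1 a) //= big1 ?addr0 => [|b ba].
  by rewrite mxE eqxx mulr1.
by rewrite mxE (inj_eq finj) eq_sym (negbTE ba) mulr0.
Qed.

Lemma embed_mx_row_free (F : fieldType) k n (f : 'I_k -> 'I_n) :
  injective f -> row_free (embed_mx F f).
Proof.
move=> finj; apply/inj_row_free => v vE0; apply/rowP => a.
by rewrite -(embed_mx_entry v a finj) vE0 !mxE.
Qed.

Lemma qform_embed (C : numClosedFieldType) k n (f : 'I_k -> 'I_n) (A : 'M[C]_n) u :
  qform A (u *m embed_mx C f) = qform (\matrix_(a, b) A (f a) (f b)) u.
Proof.
have -> : \matrix_(a, b) A (f a) (f b) = embed_mx C f *m A *m (embed_mx C f) ^t*.
  apply/matrixP => a b; rewrite !mxE (bigD1 (f b)) //= big1 ?addr0 => [|l lb].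
    rewrite !mxE eqxx conjC1 mulr1 (bigD1 (f a)) //= big1 ?addr0 => [|i ia].
      by rewrite !mxE eqxx mul1r.
    by rewrite !mxE (negbTE ia) mul0r.
  by rewrite !mxE (negbTE lb) conjC0 mulr0.
by rewrite /qform trmx_mul map_mxM !mulmxA.
Qed.

(* The form of the complete graph, |sum u|^2 - sum |u_a|^2, is <= 0 on
   zero-sum vectors. *)
Lemma qform_zero_sum_complete (C : numClosedFieldType) k (u : 'rV[C]_k) :
  \sum_a u 0 a = 0 -> qform (\matrix_(a, b) (a != b)%:R) u <= 0.
Proof.
move=> u_sum0; rewrite qform_expand.
have -> : \sum_a \sum_b (\matrix_(a, b) (a != b)%:R : 'M[C]_k) a b * (u 0 a * (u 0 b)^*)
    = \sum_a u 0 a * (\sum_b u 0 b)^* - \sum_a u 0 a * (u 0 a)^*.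
  rewrite -sumrB; apply: eq_bigr => a _; rewrite rmorph_sum mulr_sumr.
  rewrite (bigD1 a) //= [X in _ = X - _](bigD1 a) //= addrAC subrr add0r mxE eqxx mul0r add0r.
  by apply: eq_bigr => b ba; rewrite mxE eq_sym ba mul1r.
rewrite u_sum0 conjC0 big1 ?add0r => [|a _]; last by rewrite mulr0.
by rewrite oppr_le0 sumr_ge0 // => a _; rewrite mul_conjC_ge0.
Qed.

(* Rows e_j - e_k (j < k): a basis of the zero-sum vectors of length k+1. *)
Definition diff_mx (R : nzRingType) k : 'M[R]_(k, k.+1) :=
  \matrix_(j, a) ((a == lift ord_max j)%:R - (a == ord_max)%:R).

Lemma diff_mx_row_sum (R : nzRingType) k (v : 'rV[R]_k) :
  \sum_a (v *m diff_mx R k) 0 a = 0.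
Proof.
have sum_delta (c : 'I_k.+1) : \sum_a ((a == c)%:R : R) = 1.
  by rewrite (bigD1 c) //= eqxx big1 ?addr0 // => a /negbTE ->.
rewrite (eq_bigr (fun a => \sum_j v 0 j * diff_mx R k j a)) => [|a _]; last by rewrite mxE.
rewrite exchange_big /= big1 // => j _; rewrite -mulr_sumr.
rewrite (eq_bigr (fun a => (a == lift ord_max j)%:R - (a == ord_max)%:R)) => [|a _].
  by rewrite sumrB !sum_delta subrr mulr0.
by rewrite mxE.
Qed.

Lemma diff_mx_row_free (F : fieldType) k : row_free (diff_mx F k).
Proof.
apply/inj_row_free => v vD0; apply/rowP => j.
have <- : (v *m diff_mx F k) 0 (lift ord_max j) = v 0 j.
  have not_max i : (lift ord_max i == ord_max) = false by rewrite eq_sym (negbTE (neq_lift _ _)).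
  rewrite mxE (bigD1 j) //= big1 ?addr0 => [|i ij].
    by rewrite mxE eqxx not_max subr0 mulr1.
  by rewrite mxE (inj_eq (@lift_inj _ _)) eq_sym (negbTE ij) not_max subr0 mulr0.
by rewrite vD0 !mxE.
Qed.

Lemma adj_mx_hermitian m (e : rel 'I_m) : symmetric e -> adj_mx e \is hermsymmx.
Proof.
move=> e_sym; apply/is_hermitianmxP; rewrite expr0 scale1r; apply/matrixP => i j.
by rewrite !mxE conjC_nat e_sym.
Qed.

Lemma enum_set_inj m k (S : {set 'I_m}) :
  #|S| = k -> exists f : 'I_k -> 'I_m, injective f /\ forall a, f a \in S.
Proof.
move=> cardS; exists (fun a => enum_val (cast_ord (esym cardS) a)); split.
  by move=> a b /enum_val_inj /cast_ord_inj.
by move=> a; apply: enum_valP.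
Qed.

Lemma indep_set_nonpos_eigs m (e : rel 'I_m) k :
  symmetric e -> has_indep_set k e -> has_k_nonpos_eigs k (adj_mx e).
Proof.
move=> e_sym [S [cardS indS]]; have [f [finj fS]] := enum_set_inj cardS.
apply: (nonpos_eigs_of_nonpos_subspace (W := embed_mx algC f)).
- exact: adj_mx_hermitian.
- exact: embed_mx_row_free.
move=> v; rewrite qform_embed qform_expand big1 // => a _; rewrite big1 // => b _.
by rewrite !mxE (negbTE (indS _ _ (fS a) (fS b))) mul0r.
Qed.

Lemma clique_nonpos_eigs m (e : rel 'I_m) k :
  simple_graph e -> has_clique k.+1 e -> has_k_nonpos_eigs k (adj_mx e).
Proof.
move=> [e_sym eirr] [S [cardS cliqueS]]; have [g [ginj gS]] := enum_set_inj cardS.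
apply: (nonpos_eigs_of_nonpos_subspace (W := diff_mx algC k *m embed_mx algC g)).
- exact: adj_mx_hermitian.
- by rewrite /row_free mxrankMfree ?embed_mx_row_free //; apply: diff_mx_row_free.
move=> v; rewrite mulmxA qform_embed.
have -> : \matrix_(a, b) adj_mx e (g a) (g b) = \matrix_(a, b) (a != b)%:R.
  apply/matrixP => a b; rewrite !mxE; have [->|ab] := eqVneq a b; first by rewrite eirr.
  by rewrite cliqueS ?gS // (inj_eq ginj).
exact/qform_zero_sum_complete/diff_mx_row_sum.
Qed.

Lemma NPO_prop_of_Ramsey_prop k N : Ramsey_prop k k.+1 N -> NPO_prop k N.
Proof.
move=> ramsey m e le_Nm simple_e; have [e_sym _] := simple_e.
have [indep | clique] := ramsey m e le_Nm simple_e.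
- exact: indep_set_nonpos_eigs.
- exact: clique_nonpos_eigs.
Qed.

Theorem mainTheorem1 (k : nat) (hk : (0 < k)%N) :
  exists n : nat, is_NPO k n /\
    exists R : nat, is_Ramsey k k.+1 R /\ (n <= R)%N.
Proof.
have [R [ramseyR minR]] := ex_minimal (@ramsey_prop_pow2 k k.+1).
have npoR := NPO_prop_of_Ramsey_prop ramseyR.
have [n [npo_n min_n]] := ex_minimal npoR.
by exists n; split=> //; exists R; split=> //; apply: min_n.
Qed.
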